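(* The matrices $\hat U(\gamma_* )=[u_1(\gamma_* )\ \ u_2(\gamma_* )-\theta_*u_1(\gamma_* )]$ and $\hat V(\gamma_* )=[v_1(\gamma_* )\ \ v_2(\gamma_* )-\theta_*v_1(\gamma_* )]$, where $\theta_*=\frac{\gamma_*}{\mu_1-\mu_2}$, satisfy $\hat U(\gamma_* )^*\hat U(\gamma_* )=\hat V(\gamma_* )^*\hat V(\gamma_* )$.
   Context: Let $P(\lambda)=\sum_{j=0}^m A_j\lambda^j$ be an $n\times n$ matrix polynomial with $\det A_m\neq0$, let $\mu_1\neq\mu_2$ be complex numbers, $P[\mu_1,\mu_2]=\frac{P(\mu_1)-P(\mu_2)}{\mu_1-\mu_2}$, and $F[P(\mu_1,\mu_2);\gamma]=\begin{bmatrix} P(\mu_1) & 0\\ \gamma P[\mu_1,\mu_2] & P(\mu_2)\end{bmatrix}$. Assume $\mathrm{rank}(P[\mu_1,\mu_2])\ge2$, let $\gamma_*>0$ be a point where $s_{2n-1}(F[P(\mu_1,\mu_2);\gamma])$ attains its maximum $s_*>0$ over $\gamma\ge0$. Let $\begin{bmatrix} u_1(\gamma_* )\\ u_2(\gamma_* )\end{bmatrix},\begin{bmatrix} v_1(\gamma_* )\\ v_2(\gamma_* )\end{bmatrix}$ ($u_k,v_k\in\mathbb{C}^n$) be a pair of left and right singular vectors of $s_*$ chosen such that $u_2(\gamma_* )^*P[\mu_1,\mu_2]v_1(\gamma_* )=0$, $u_2(\gamma_* )^*u_1(\gamma_* )=v_2(\gamma_* )^*v_1(\gamma_* )$, and $[u_1(\gamma_*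 )\ u_2(\gamma_* )]^*[u_1(\gamma_* )\ u_2(\gamma_* )]=[v_1(\gamma_* )\ v_2(\gamma_* )]^*[v_1(\gamma_* )\ v_2(\gamma_* )]$ (such a pair exists). *)

From HB Require Import structures.
From mathcomp Require Import all_boot all_order all_algebra all_field.
Set Implicit Arguments. Unset Strict Implicit. Unset Printing Implicit Defensive.
Import Order.TTheory GRing.Theory Num.Theory.
Local Open Scope ring_scope.

Definition ctmx (m n : nat) (A : 'M[algC]_(m, n)) : 'M[algC]_(n, m) :=
  (map_mx (@Num.conj algC) A)^T.

Definition mxpoly_eval (n m : nat) (A : nat -> 'M[algC]_n) (l : algC) : 'M[algC]_n :=
  \sum_(j < m.+1) l ^+ j *: A j.

Definition divdiff (n m : nat) (A : nat -> 'M[algC]_n) (mu1 mu2 : algC) : 'M[algC]_n :=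
  (mu1 - mu2)^-1 *: (mxpoly_eval m A mu1 - mxpoly_eval m A mu2).

Definition Fmx (n m : nat) (A : nat -> 'M[algC]_n) (mu1 mu2 g : algC) : 'M[algC]_(n + n) :=
  block_mx (mxpoly_eval m A mu1) 0 (g *: divdiff m A mu1 mu2) (mxpoly_eval m A mu2).

(* Eigenvalues (with algebraic multiplicity) of a square matrix: roots of
   its characteristic polynomial, which splits over algC. *)
Lemma char_poly_splits (N : nat) (B : 'M[algC]_N) :
  exists r : seq algC, char_poly B == lead_coef (char_poly B) *: \prod_(z <- r) ('X - z%:P).
Proof. by have [r Hr] := closed_field_poly_normal (char_poly B); by exists r; apply/eqP. Qed.

Definition eigvals (N : nat) (B : 'M[algC]_N) : seq algC := xchoose (char_poly_splits B).

(* k-th largest singular value (1-based: s_1 >= s_2 >= ... >= s_N):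
   nonnegative square root of the k-th largest eigenvalue of A^* A. *)
Definition sing_val (N : nat) (k : nat) (A : 'M[algC]_N) : algC :=
  sqrtC (nth 0 (sort (fun x y : algC => y <= x) (eigvals (ctmx A *m A))) k.-1).

Definition vnorm2 (N : nat) (x : 'cV[algC]_N) : algC := (ctmx x *m x) 0 0.

From HB Require Import structures.
From mathcomp Require Import all_boot all_order all_algebra all_field.
Import Order.TTheory GRing.Theory Num.Theory.
Local Open Scope ring_scope.

(* Both hatted matrices arise from [u1 u2] and [v1 v2] by right multiplication
   with the same column operation T = [1 -theta; 0 1], so their Gram matrices
   are T^* (U^* U) T and T^* (V^* V) T; only the Gram hypothesis is needed. *)

Lemma ctmxM (p q r : nat) (X : 'M[algC]_(p, q)) (Y : 'M[algC]_(q, r)) :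
  ctmx (X *m Y) = ctmx Y *m ctmx X.
Proof. by rewrite /ctmx map_mxM trmx_mul. Qed.

Lemma gram_mulmxr (p q r : nat) (X Y : 'M[algC]_(p, q)) (T : 'M[algC]_(q, r)) :
  ctmx X *m X = ctmx Y *m Y -> ctmx (X *m T) *m (X *m T) = ctmx (Y *m T) *m (Y *m T).
Proof. by move=> XY; rewrite !ctmxM !mulmxA -!(mulmxA (ctmx T)) XY. Qed.

Lemma row_mx_subrZ (R : comNzRingType) (k : nat) (a b : 'M[R]_(k, 1)) (t : R) :
  row_mx a (b - t *: a) = row_mx a b *m block_mx 1%:M (- t)%:M 0 1%:M.
Proof.
by rewrite mul_row_block !mulmx1 mul_mx_scalar mulmx0 addr0 addrC scaleNr.
Qed.

Theorem corollary1 (n m : nat) (A : nat -> 'M[algC]_n) (mu1 mu2 : algC)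
  (gs ss : algC) (u v : 'cV[algC]_(n + n)) :
  \det (A m) != 0 ->
  mu1 != mu2 ->
  (2 <= \rank (divdiff m A mu1 mu2))%N ->
  0 < gs ->
  ss = sing_val (n + n).-1 (Fmx m A mu1 mu2 gs) ->
  (forall g : algC, g \is Num.real -> 0 <= g ->
     sing_val (n + n).-1 (Fmx m A mu1 mu2 g) <= ss) ->
  0 < ss ->
  vnorm2 u = 1 -> vnorm2 v = 1 ->
  Fmx m A mu1 mu2 gs *m v = ss *: u ->
  ctmx (Fmx m A mu1 mu2 gs) *m u = ss *: v ->
  ctmx (dsubmx u) *m divdiff m A mu1 mu2 *m usubmx v = 0 ->
  ctmx (dsubmx u) *m usubmx u = ctmx (dsubmx v) *m usubmx v ->
  ctmx (row_mx (usubmx u) (dsubmx u)) *m row_mx (usubmx u) (dsubmx u)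
    = ctmx (row_mx (usubmx v) (dsubmx v)) *m row_mx (usubmx v) (dsubmx v) ->
  let theta := gs / (mu1 - mu2) in
  let Uh := row_mx (usubmx u) (dsubmx u - theta *: usubmx u) in
  let Vh := row_mx (usubmx v) (dsubmx v - theta *: usubmx v) in
  ctmx Uh *m Uh = ctmx Vh *m Vh.
Proof.
move=> _ _ _ _ _ _ _ _ _ _ _ _ _ gramUV theta Uh Vh.
by rewrite /Uh /Vh !row_mx_subrZ; apply: gram_mulmxr.
Qed.
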